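(* Let $\mathcal{G}=(\mathcal{V},\mathcal{E})$ be a strongly endotactic reaction network in $\mathbb{R}^2$ whose stoichiometric subspace is two-dimensional, and assume that all source complexes of $\mathcal{G}$ lie on the boundary of the convex hull of the set of source complexes. Then there exists a weakly reversible reaction network $\tilde{\mathcal{G}}$ such that $\mathcal{G}\sqsubseteq\tilde{\mathcal{G}}$. Consequently, every two-dimensional strongly endotactic network is effectively extremally weakly reversible.
   Context: A reaction network (E-graph) $\mathcal{G}=(\mathcal{V},\mathcal{E})$ is a finite directed graph whose nodes are distinct elements of a finite set $Y\subset\mathbb{R}^d_{\ge 0}$, with $\mathcal{V}\neq\emptyset$, every node incident to at least one edge, and no edge from a node to itself. For an edge $e$, $\mathbf{s}(e)$ is its source node, $\mathbf{t}(e)$ its target, $\mathbf{v}(e)=\mathbf{t}(e)-\mathbf{s}(e)$; the stoichiometric subspace is $\mathrm{span}\{\mathbf{v}(e):e\in\mathcal{E}\}$; source complexes are $\mathcal{SC}_{\mathcal{G}}=\{\mathbf{s}(e):e\in\mathcal{E}\}$. Given positive rate constants $\mathcal{K}=(k_e)$, $\mathcal{G}$ generates $\mathbf{f}_{\mathcal{G}(\mathcal{K})}(\mathbf{x})=\sum_e k_e\mathbf{x}^{\mathbf{s}(e)}\mathbf{v}(e)$ ($\mathbf{x}^{\mathbf{y}}=\prod_i x_i^{y_i}$, $0^0=1$). $\mathcal{G}\sqsubseteq\tilde{\mathcal{G}}$ means: for every positive rate constants $\mathcal{K}$ for $\mathcal{G}$ there exist positive rate constants $\tilde{\mathcal{K}}$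 for $\tilde{\mathcal{G}}$ with $\mathbf{f}_{\tilde{\mathcal{G}}(\tilde{\mathcal{K}})}=\mathbf{f}_{\mathcal{G}(\mathcal{K})}$ identically. $\mathcal{G}$ is weakly reversible if every edge lies in a directed cycle. $\mathcal{G}$ is strongly endotactic if for every $\mathbf{w}\in\mathbb{R}^d$ and $e_i\in\mathcal{E}$ with $\mathbf{w}\cdot\mathbf{v}(e_i)<0$ there exists $e_j\in\mathcal{E}$ with $\mathbf{w}\cdot(\mathbf{s}(e_j)-\mathbf{s}(e_i))<0$, $\mathbf{w}\cdot\mathbf{v}(e_j)>0$, and $\mathbf{w}\cdot(\mathbf{s}(e_j)-\mathbf{s}(e_k))\le 0$ for all $e_k\in\mathcal{E}$. The extreme source complexes $\mathcal{EC}_{\mathcal{G}}$ are the source complexes on the boundary of the convex hull of $\mathcal{SC}_{\mathcal{G}}$; the extremal reaction set is $\mathcal{EE}_{\mathcal{G}}=\{e\in\mathcal{E}:\mathbf{s}(e)\in\mathcal{EC}_{\mathcal{G}}\}$, and $\mathcal{EV}_{\mathcal{G}}$ is the set of sources and targets of edges in $\mathcal{EE}_{\mathcal{G}}$. $\mathcal{G}$ is extremally weakly reversible if the network $(\mathcal{EV}_{\mathcal{G}},\mathcal{EE}_{\mathcal{G}})$ is weakly reversible. A polynomial system is extremally weakly reversible if it is generated by some extremally weakly reversible network, and a network is effectively extremally weakly reversible if every system it generates (for any positive rate constants) is extremally weakly reversible. *)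

From Stdlib Require Import Reals List.
Import ListNotations.
Open Scope R_scope.

Definition pt : Type := (R * R)%type.
Definition edge : Type := (pt * pt)%type.

Definition src (e : edge) : pt := fst e.
Definition tgt (e : edge) : pt := snd e.

Definition vadd (a b : pt) : pt := (fst a + fst b, snd a + snd b).
Definition vsub (a b : pt) : pt := (fst a - fst b, snd a - snd b).
Definition vscale (c : R) (a : pt) : pt := (c * fst a, c * snd a).
Definition dot (a b : pt) : R := fst a * fst b + snd a * snd b.
Definition dist2 (a b : pt) : R := dot (vsub a b) (vsub a b).

Definition rvec (e : edge) : pt := vsub (tgt e) (src e).

Definition nonneg (x : pt) : Prop := 0 <= fst x /\ 0 <= snd x.

Definition vsum (E : list edge) (F : edge -> pt) : pt :=
  fold_right (fun e acc => vadd (F e) acc) (0, 0) E.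
Definition rsum (E : list edge) (F : edge -> R) : R :=
  fold_right (fun e acc => F e + acc) 0 E.

(* The node set is the set of
   endpoints of edges, so every node is incident to an edge and V <> empty. *)
Definition is_network (E : list edge) : Prop :=
  E <> [] /\ NoDup E /\
  (forall e, In e E -> src e <> tgt e /\ nonneg (src e) /\ nonneg (tgt e)).

(* real power with the convention 0^0 = 1 (used for x >= 0) *)
Definition rpow (x y : R) : R :=
  if Req_EM_T y 0 then 1 else if Req_EM_T x 0 then 0 else Rpower x y.

Definition monom (x y : pt) : R := rpow (fst x) (fst y) * rpow (snd x) (snd y).

Definition pos_rates (E : list edge) (k : edge -> R) : Prop :=
  forall e, In e E -> 0 < k e.

Definition fvec (E : list edge) (k : edge -> R) (x : pt) : pt :=
  vsum E (fun e => vscale (k e * monom x (src e)) (rvec e)).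

(* G ⊑ G~ ; "identically" = on the whole closed orthant R^2_{>=0} *)
Definition realized_by (E E' : list edge) : Prop :=
  forall k, pos_rates E k ->
    exists k', pos_rates E' k' /\
      forall x, nonneg x -> fvec E' k' x = fvec E k x.

Definition in_stoich_span (E : list edge) (u : pt) : Prop :=
  exists c : edge -> R, u = vsum E (fun e => vscale (c e) (rvec e)).

Definition stoich_two_dim (E : list edge) : Prop :=
  forall u : pt, in_stoich_span E u.

Definition strongly_endotactic (E : list edge) : Prop :=
  forall (w : pt) (ei : edge), In ei E -> dot w (rvec ei) < 0 ->
    exists ej, In ej E /\ dot w (vsub (src ej) (src ei)) < 0 /\
      0 < dot w (rvec ej) /\
      (forall ek, In ek E -> dot w (vsub (src ej) (src ek)) <= 0).

Definition in_source_hull (E : list edge) (y : pt) : Prop :=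
  exists c : edge -> R, (forall e, In e E -> 0 <= c e) /\
    rsum E c = 1 /\ y = vsum E (fun e => vscale (c e) (src e)).

Definition on_source_hull_boundary (E : list edge) (y : pt) : Prop :=
  (forall eps, 0 < eps -> exists z, in_source_hull E z /\ dist2 z y < eps * eps) /\
  ~ (exists eps, 0 < eps /\
        forall z, dist2 z y < eps * eps -> in_source_hull E z).

Inductive reach (P : edge -> Prop) : pt -> pt -> Prop :=
| reach_refl : forall a, reach P a a
| reach_step : forall e b, P e -> reach P (tgt e) b -> reach P (src e) b.

Definition weakly_reversible_on (P : edge -> Prop) : Prop :=
  forall e, P e -> reach P (tgt e) (src e).

Definition weakly_reversible (E : list edge) : Prop :=
  weakly_reversible_on (fun e => In e E).

Definition extremal_edge (E : list edge) (e : edge) : Prop :=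
  In e E /\ on_source_hull_boundary E (src e).

Definition extremally_weakly_reversible (E : list edge) : Prop :=
  weakly_reversible_on (extremal_edge E).

Definition system_EWR (f : pt -> pt) : Prop :=
  exists E' k', is_network E' /\ pos_rates E' k' /\
    extremally_weakly_reversible E' /\
    forall x, nonneg x -> fvec E' k' x = f x.

Definition effectively_EWR (E : list edge) : Prop :=
  forall k, pos_rates E k -> system_EWR (fvec E k).

From Pilot Require Import Defs.
From Stdlib Require Import Reals List Lra Lia Psatz Classical ClassicalEpsilon.
Import ListNotations.
Open Scope R_scope.

(* A source complex [y] is supported when some nonzero [w] has [dot w (u - y) >= 0] for every
   source complex [u]; these are exactly the source complexes on the boundary of their convex
   hull. At a supported source [s], strong endotacticity and Farkas' lemma put every reaction
   vector into the cone of the [u - s], [u] supported. Call [t] a target of [s] when [t - s]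
   can be split off the unit-rate flux at [s] within that cone: then every positive-rate flux
   at [s] is a positive combination of the [t - s], so replacing the reactions out of
   supported sources by the reactions [s -> t] gives the same dynamics and the same hull, and
   the extremal reactions of the new network are exactly these new reactions.
   The new reactions form a weakly reversible graph. Otherwise the sources reachable from a
   target [t] of [y] form a target-closed set missing [y]; each of its points [u] then has a
   tight normal (a supporting normal orthogonal to every reaction at [u]), and as the reaction
   vectors span the plane, some reaction leaves the supporting line at [u] rising along it.
   Chaining such reactions walks around the source polygon with consistently turning normals;
   these wind around the origin, so the walk meets the supporting line of [y]. *)

Lemma pt_ext (a b : pt) : fst a = fst b -> snd a = snd b -> a = b.
Proof. destruct a, b; simpl; intros -> ->; reflexivity. Qed.

Definition pt_eq_dec (a b : pt) : {a = b} + {a <> b}.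
Proof. decide equality; apply Req_EM_T. Defined.

Definition edge_eq_dec (a b : edge) : {a = b} + {a <> b}.
Proof. decide equality; apply pt_eq_dec. Defined.

Definition vzero : pt := (0, 0).
Definition cross (a b : pt) : R := fst a * snd b - snd a * fst b.

Ltac vec_ring := apply pt_ext; unfold vadd, vsub, vscale, vzero; simpl; ring.
Ltac vec_field := apply pt_ext; unfold vadd, vsub, vscale, vzero; simpl; field.

Lemma dot_vsub w a b : dot w (vsub a b) = dot w a - dot w b.
Proof. unfold dot, vsub; simpl; ring. Qed.

Lemma dot_vscale w c x : dot w (vscale c x) = c * dot w x.
Proof. unfold dot, vscale; simpl; ring. Qed.

Lemma dot_comm a b : dot a b = dot b a.
Proof. unfold dot; ring. Qed.

Lemma dot_zero_l x : dot vzero x = 0.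
Proof. unfold dot, vzero; simpl; ring. Qed.

Lemma sqr_pos x : x <> 0 -> 0 < x * x.
Proof. intro H. pose proof (Rsqr_pos_lt x H). unfold Rsqr in *. lra. Qed.

Lemma dot_self_pos d : d <> vzero -> 0 < dot d d.
Proof.
  destruct d as [d1 d2]; unfold dot, vzero; simpl; intro Hd.
  destruct (Req_EM_T d1 0) as [->|H1].
  - assert (d2 <> 0) by (intros ->; apply Hd; reflexivity).
    pose proof (sqr_pos d2). nra.
  - pose proof (sqr_pos d1 H1). nra.
Qed.

Lemma vsub_neq0 t s : t <> s -> vsub t s <> vzero.
Proof.
  intros H Hz. apply H. unfold vsub, vzero in Hz. injection Hz; intros.
  apply pt_ext; lra.
Qed.

Lemma cross_eq0_of_perp w x d : w <> vzero -> dot w x = 0 -> dot w d = 0 -> cross x d = 0.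
Proof.
  intros Hw Hx Hd. pose proof (dot_self_pos w Hw) as Hww.
  assert (H : dot w w * cross x d = dot w x * cross w d - dot w d * cross w x)
    by (unfold dot, cross; ring).
  rewrite Hx, Hd in H. apply (Rmult_eq_reg_l (dot w w)); lra.
Qed.

Lemma perp_parallel w x d : w <> vzero -> dot w x = 0 -> dot w d = 0 -> d <> vzero ->
  x = vscale (dot x d / dot d d) d.
Proof.
  intros Hw Hx Hd Hd0.
  pose proof (dot_self_pos d Hd0) as Hdd. pose proof (cross_eq0_of_perp w x d Hw Hx Hd) as Hc.
  destruct x as [x1 x2], d as [d1 d2]; unfold dot, cross, vscale in *; simpl in *.
  assert (Hne : d1 * d1 + d2 * d2 <> 0) by lra.
  apply pt_ext; simpl; field_simplify_eq; auto.
  - transitivity (x1 * d1 ^ 2 + d2 * (x1 * d2 - x2 * d1) + d1 * x2 * d2); [ring|rewrite Hc; ring].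
  - transitivity (x2 * d2 ^ 2 - d1 * (x1 * d2 - x2 * d1) + x1 * d1 * d2); [ring|rewrite Hc; ring].
Qed.

Section Sums.
Context {A : Type}.

Fixpoint psum (l : list A) (f : A -> pt) : pt :=
  match l with [] => vzero | x :: l' => vadd (f x) (psum l' f) end.
Fixpoint lsum (l : list A) (f : A -> R) : R :=
  match l with [] => 0 | x :: l' => f x + lsum l' f end.

Lemma psum_app l1 l2 f : psum (l1 ++ l2) f = vadd (psum l1 f) (psum l2 f).
Proof. induction l1 as [|x l1 IH]; simpl; [|rewrite IH]; vec_ring. Qed.

Lemma psum_ext l f g : (forall x, In x l -> f x = g x) -> psum l f = psum l g.
Proof. induction l; simpl; intros H; [|rewrite H, IHl]; auto. Qed.

Lemma lsum_ext l f g : (forall x, In x l -> f x = g x) -> lsum l f = lsum l g.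
Proof. induction l; simpl; intros H; [|rewrite H, IHl]; auto. Qed.

Lemma psum_add l f g : psum l (fun x => vadd (f x) (g x)) = vadd (psum l f) (psum l g).
Proof. induction l as [|x l IH]; simpl; [|rewrite IH]; vec_ring. Qed.

Lemma psum_sub l f g : psum l (fun x => vsub (f x) (g x)) = vsub (psum l f) (psum l g).
Proof. induction l as [|x l IH]; simpl; [|rewrite IH]; vec_ring. Qed.

Lemma psum_scale l c f : psum l (fun x => vscale c (f x)) = vscale c (psum l f).
Proof. induction l as [|x l IH]; simpl; [|rewrite IH]; vec_ring. Qed.

Lemma psum_zero l f : (forall x, In x l -> f x = vzero) -> psum l f = vzero.
Proof. induction l; simpl; intros H; [|rewrite H, IHl]; auto; vec_ring. Qed.

Lemma psum_filter l (p : A -> bool) f :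
  psum l f = vadd (psum (filter p l) f) (psum (filter (fun x => negb (p x)) l) f).
Proof. induction l as [|x l IH]; simpl; [|rewrite IH; destruct (p x)]; simpl; vec_ring. Qed.

Lemma dot_psum l w f : dot w (psum l f) = lsum l (fun x => dot w (f x)).
Proof. induction l as [|x l IH]; simpl; [|rewrite <- IH]; unfold dot, vadd, vzero; simpl; ring. Qed.

Lemma lsum_nonneg l f : (forall x, In x l -> 0 <= f x) -> 0 <= lsum l f.
Proof.
  induction l; simpl; intros H; [lra|].
  pose proof (H a (or_introl eq_refl)). pose proof (IHl (fun x Hx => H x (or_intror Hx))). lra.
Qed.

Lemma lsum_eq0_nonneg l f : (forall x, In x l -> 0 <= f x) -> lsum l f = 0 ->
  forall x, In x l -> f x = 0.
Proof.
  induction l as [|a l IH]; simpl; intros H Hs x Hx; [contradiction|].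
  pose proof (H a (or_introl eq_refl)).
  pose proof (lsum_nonneg l f (fun y Hy => H y (or_intror Hy))).
  destruct Hx as [<-|Hx]; [lra|]. apply IH; auto. lra.
Qed.

Lemma lsum_pos_exists l f : 0 < lsum l f -> exists x, In x l /\ 0 < f x.
Proof.
  induction l as [|a l IH]; simpl; intros H; [lra|].
  destruct (Rlt_dec 0 (f a)); [exists a; auto|].
  destruct IH as [x [? ?]]; [lra|]. exists x; auto.
Qed.

Lemma lsum_neg_exists l f : lsum l f < 0 -> exists x, In x l /\ f x < 0.
Proof.
  induction l as [|a l IH]; simpl; intros H; [lra|].
  destruct (Rlt_dec (f a) 0); [exists a; auto|].
  destruct IH as [x [? ?]]; [lra|]. exists x; auto.
Qed.

Lemma lsum_add l f g : lsum l (fun x => f x + g x) = lsum l f + lsum l g.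
Proof. induction l as [|a l IH]; simpl; [|rewrite IH]; ring. Qed.

Lemma lsum_scale l a f : lsum l (fun x => a * f x) = a * lsum l f.
Proof. induction l as [|x l IH]; simpl; [|rewrite IH]; ring. Qed.

Lemma lsum_zero l : lsum l (fun _ => 0) = 0.
Proof. induction l as [|a l IH]; simpl; [|rewrite IH]; ring. Qed.

End Sums.

Lemma psum_flat_map {A B} (g : A -> list B) l f :
  psum (flat_map g l) f = psum l (fun a => psum (g a) f).
Proof. induction l as [|a l IH]; simpl; [|rewrite psum_app, IH]; reflexivity. Qed.

Lemma psum_map {A B} (h : A -> B) l f : psum (map h l) f = psum l (fun x => f (h x)).
Proof. induction l as [|a l IH]; simpl; [|rewrite IH]; reflexivity. Qed.

Lemma vsum_psum E F : vsum E F = psum E F.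
Proof. induction E as [|e E IH]; simpl; [|rewrite IH]; reflexivity. Qed.

Lemma rsum_lsum E F : rsum E F = lsum E F.
Proof. induction E as [|e E IH]; simpl; [|rewrite IH]; reflexivity. Qed.

Section SplitAt.
Context {A : Type} (eq_dec : forall x y : A, {x = y} + {x <> y}).

Lemma psum_split_at L t f : NoDup L -> In t L ->
  psum L f = vadd (f t) (psum L (fun u => if eq_dec u t then vzero else f u)).
Proof.
  induction L as [|a L IH]; simpl; intros Hnd Ht; [contradiction|].
  inversion Hnd as [|? ? HaL HL]; subst.
  destruct (eq_dec a t) as [<-|Hat].
  - rewrite (psum_ext L (fun u => if eq_dec u a then vzero else f u) f); [vec_ring|].
    intros u Hu. destruct (eq_dec u a) as [->|]; [contradiction|reflexivity].
  - destruct Ht as [->|Ht]; [contradiction|]. rewrite (IH HL Ht). vec_ring.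
Qed.

Lemma lsum_split_at L t f : NoDup L -> In t L ->
  lsum L f = f t + lsum L (fun u => if eq_dec u t then 0 else f u).
Proof.
  induction L as [|a L IH]; simpl; intros Hnd Ht; [contradiction|].
  inversion Hnd as [|? ? HaL HL]; subst.
  destruct (eq_dec a t) as [<-|Hat].
  - rewrite (lsum_ext L (fun u => if eq_dec u a then 0 else f u) f); [ring|].
    intros u Hu. destruct (eq_dec u a) as [->|]; [contradiction|reflexivity].
  - destruct Ht as [->|Ht]; [contradiction|]. rewrite (IH HL Ht). ring.
Qed.

End SplitAt.

Lemma exists_pos_lower_bound {A} (l : list A) (f : A -> R) : (forall x, In x l -> 0 < f x) ->
  exists m, 0 < m /\ forall x, In x l -> m <= f x.
Proof.
  induction l as [|a l IH]; intros H; [exists 1; split; [lra|intros _ []]|].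
  destruct (IH (fun x Hx => H x (or_intror Hx))) as [m [Hm Hml]].
  exists (Rmin (f a) m). split; [apply Rmin_glb_lt; auto; apply H; left; auto|].
  intros x [<-|Hx]; [apply Rmin_l|]. eapply Rle_trans; [apply Rmin_r|auto].
Qed.

Lemma exists_pos_upper_bound {A} (l : list A) (f : A -> R) :
  exists M, 0 < M /\ forall x, In x l -> f x <= M.
Proof.
  induction l as [|a l IH]; [exists 1; split; [lra|intros _ []]|].
  destruct IH as [M [HM HMl]].
  exists (Rmax (f a) M). split; [eapply Rlt_le_trans; [exact HM|apply Rmax_r]|].
  intros x [<-|Hx]; [apply Rmax_l|]. eapply Rle_trans; [apply HMl; auto|apply Rmax_r].
Qed.

Lemma exists_min_dot (l : list pt) w : l <> [] ->
  exists m, In m l /\ forall u, In u l -> dot w m <= dot w u.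
Proof.
  induction l as [|a l IH]; intros H; [congruence|].
  destruct l as [|b l'].
  - exists a. split; [left; auto|]. intros u [<-|[]]. lra.
  - destruct IH as [m [Hm Hmin]]; [discriminate|].
    destruct (Rle_dec (dot w a) (dot w m)).
    + exists a. split; [left; auto|]. intros u [<-|Hu]; [lra|]. specialize (Hmin u Hu); lra.
    + exists m. split; [right; auto|]. intros u [<-|Hu]; [lra|auto].
Qed.

(** * Winding of normals in the plane *)

Lemma pigeonhole {A} (f : nat -> A) (L : list A) : (forall i, In (f i) L) ->
  exists a b, (a < b)%nat /\ f a = f b.
Proof.
  intros HL. apply NNPP; intro Hn.
  assert (Hnd : NoDup (map f (seq 0 (S (length L))))).
  { apply NoDup_map_NoDup_ForallPairs; [|apply seq_NoDup].
    intros x y _ _ Hxy. destruct (Nat.lt_trichotomy x y) as [h|[h|h]]; auto;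
      exfalso; apply Hn; eauto. }
  apply NoDup_incl_length with (l' := L) in Hnd.
  - rewrite length_map, length_seq in Hnd. lia.
  - intros z Hz. apply in_map_iff in Hz. destruct Hz as [i [<- _]]. auto.
Qed.

Lemma lagrange_identity v n : dot v v * dot n n = dot n v * dot n v + cross v n * cross v n.
Proof. unfold dot, cross; ring. Qed.

Lemma dot_decomposition v n u : dot v v * dot n u = dot v u * dot n v + cross v u * cross v n.
Proof. unfold dot, cross; ring. Qed.

(* Consecutive normals [a], [n], [b] of a path whose steps [v], [v'] are tangent to [n]
   and to [b] turn in the same direction. *)
Lemma cross_sign_consecutive a n b v v' :
  0 < dot a v -> dot n v = 0 -> 0 < dot n v' -> dot b v' = 0 -> b <> vzero -> n <> vzero ->
  dot b v <= 0 -> 0 < cross a n * cross n b.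
Proof.
  intros Hav Hnv Hnv' Hbv' Hb Hn Hbv.
  assert (Hv : v <> vzero) by (intros ->; unfold dot, vzero in Hav; simpl in Hav; lra).
  pose proof (dot_self_pos v Hv) as HV.
  assert (Hvn : cross v n <> 0).
  { intro Hc. pose proof (lagrange_identity v n) as HL. rewrite Hnv, Hc in HL.
    pose proof (dot_self_pos n Hn). nra. }
  assert (Hbv0 : dot b v < 0).
  { destruct (Rle_lt_or_eq_dec _ _ Hbv) as [|Hbv0]; [assumption|exfalso].
    pose proof (cross_eq0_of_perp b v v' Hb Hbv0 Hbv') as Hvv'.
    pose proof (dot_decomposition v n v') as HD. rewrite Hnv, Hvv' in HD. nra. }
  assert (Hprod : dot v v * dot v v * (cross a n * cross n b)
                  = dot a v * (- dot b v) * (cross v n * cross v n)).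
  { transitivity ((dot a v * cross v n + cross a v * dot n v) *
                  (- dot b v * cross v n + dot n v * cross v b));
      [unfold dot, cross; ring|rewrite Hnv; ring]. }
  pose proof (sqr_pos _ Hvn).
  assert (0 < dot a v * (- dot b v) * (cross v n * cross v n))
    by (apply Rmult_lt_0_compat; [apply Rmult_lt_0_compat|]; lra).
  assert (0 < dot v v * dot v v) by (apply Rmult_lt_0_compat; lra).
  nra.
Qed.

Lemma cross_trans a b c w : 0 < cross a w -> 0 < cross b w -> 0 < cross c w ->
  0 < cross a b -> 0 < cross b c -> 0 < cross a c.
Proof.
  destruct a as [a1 a2], b as [b1 b2], c as [c1 c2], w as [w1 w2]; unfold cross; simpl; intros.
  assert ((a1*b2 - a2*b1) * (c1*w2 - c2*w1) + (b1*c2 - b2*c1) * (a1*w2 - a2*w1)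
          + (c1*a2 - c2*a1) * (b1*w2 - b2*w1) = 0) by ring.
  nra.
Qed.

Lemma cramer p q w : cross p q <> 0 ->
  w = vadd (vscale (cross w q / cross p q) p) (vscale (cross p w / cross p q) q).
Proof.
  destruct p as [p1 p2], q as [q1 q2], w as [w1 w2]; unfold cross; simpl; intros.
  vec_field; exact H.
Qed.

Section Winding.
Variables (n : nat -> pt) (a b : nat).
Hypotheses (Hab : (a < b)%nat) (Hclosed : n b = n a).

(* A closed chain of vectors turning strictly counterclockwise at each step winds around
   the origin, so every direction lies between two consecutive vectors of the chain. *)
Lemma winding_ccw : (forall i, (a <= i < b)%nat -> 0 < cross (n i) (n (S i))) ->
  forall w, exists i, (a <= i < b)%nat /\ exists al be, 0 <= al /\ 0 <= be /\
    w = vadd (vscale al (n i)) (vscale be (n (S i))).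
Proof.
  intros Hpos w.
  destruct (classic (exists i, (a <= i < b)%nat /\ 0 <= cross (n i) w /\ cross (n (S i)) w <= 0))
    as [[i [Hi [H1 H2]]]|Hno].
  { exists i. split; [exact Hi|]. specialize (Hpos i Hi).
    exists (cross w (n (S i)) / cross (n i) (n (S i))), (cross (n i) w / cross (n i) (n (S i))).
    assert (0 < / cross (n i) (n (S i))) by (apply Rinv_0_lt_compat; exact Hpos).
    split; [|split; [|apply cramer; lra]]; unfold Rdiv; apply Rmult_le_pos; unfold cross in *; lra. }
  assert (Hstep : forall i, (a <= i < b)%nat -> 0 <= cross (n i) w -> 0 < cross (n (S i)) w).
  { intros i Hi H. apply Rnot_le_lt. intro. apply Hno. exists i; auto. }
  assert (Hnot_left : forall w', ~ (forall i, (a <= i <= b)%nat -> 0 < cross (n i) w')).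
  { intros w' Hw'.
    assert (Hc : forall j, (a < j <= b)%nat -> 0 < cross (n a) (n j)).
    { induction j as [|j IH]; intros Hj; [lia|].
      destruct (Nat.eq_dec j a) as [->|Hja]; [apply Hpos; lia|].
      apply (cross_trans _ (n j) _ w'); try (apply Hw'; lia); [apply IH; lia|apply Hpos; lia]. }
    specialize (Hc b ltac:(lia)). rewrite Hclosed in Hc. unfold cross in Hc. lra. }
  assert (Hfrom : forall j, (a <= j <= b)%nat -> 0 <= cross (n j) w ->
                  forall k, (j < k <= b)%nat -> 0 < cross (n k) w).
  { intros j Hj H0. induction k as [|k IH]; intros Hk; [lia|].
    destruct (Nat.eq_dec k j) as [->|Hkj]; [apply Hstep; auto; lia|].
    apply Hstep; [lia|]. left; apply IH; lia. }
  destruct (Rle_dec 0 (cross (n a) w)) as [Ha|Ha].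
  - exfalso; apply (Hnot_left w). intros i Hi.
    destruct (Nat.eq_dec i a) as [->|Hia]; [rewrite <- Hclosed|]; apply (Hfrom a); auto; lia.
  - exfalso; apply (Hnot_left (vscale (-1) w)). intros i Hi.
    assert (Hneg : cross (n i) w < 0).
    { apply Rnot_le_lt. intro Hi0. destruct (Nat.eq_dec i b) as [->|Hib].
      - rewrite Hclosed in Hi0. lra.
      - pose proof (Hfrom i Hi Hi0 b ltac:(lia)) as Hb. rewrite Hclosed in Hb. lra. }
    unfold cross, vscale in *; simpl. lra.
Qed.

End Winding.

Definition swap (p : pt) : pt := (snd p, fst p).

Lemma winding (n : nat -> pt) a b : (a < b)%nat -> n b = n a ->
  ((forall i, (a <= i < b)%nat -> 0 < cross (n i) (n (S i))) \/
   (forall i, (a <= i < b)%nat -> cross (n i) (n (S i)) < 0)) ->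
  forall w, exists i, (a <= i < b)%nat /\ exists al be, 0 <= al /\ 0 <= be /\
    w = vadd (vscale al (n i)) (vscale be (n (S i))).
Proof.
  intros Hab Hnb [Hp|Hm] w; [apply winding_ccw; auto|].
  (* The reflection [swap] reverses orientation. *)
  destruct (winding_ccw (fun i => swap (n i)) a b Hab (f_equal swap Hnb)) with (w := swap w)
    as [i [Hi [al [be [Hal [Hbe Hw]]]]]].
  { intros i Hi. specialize (Hm i Hi). unfold swap, cross in *; simpl in *. lra. }
  exists i. split; [exact Hi|]. exists al, be. split; [exact Hal|split; [exact Hbe|]].
  apply pt_ext; [apply (f_equal snd) in Hw|apply (f_equal fst) in Hw];
    unfold swap, vadd, vscale in *; simpl in *; lra.
Qed.

(* [q] walks along the boundary of the polygon spanned by the finite set [P], and [N (q i)]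
   is an inner normal at [q i] to the side [q i -- q (S i)]. *)
Section NormalChain.
Variables (P : pt -> Prop) (L : list pt) (N : pt -> pt) (q v : nat -> pt).
Hypotheses (Hfin : forall i, In (q i) L) (HP : forall i, P (q i))
  (HN0 : forall i, N (q i) <> vzero)
  (Hsupp : forall i p, P p -> 0 <= dot (N (q i)) (vsub p (q i)))
  (Hside : forall i, dot (N (q i)) (vsub (q (S i)) (q i)) = 0)
  (Hrise : forall i, 0 < dot (N (q i)) (v i))
  (Htight : forall i j, q (S j) = q i -> dot (N (q i)) (v j) = 0).

Lemma normal_chain_turns i :
  0 < cross (N (q i)) (N (q (S i))) * cross (N (q (S i))) (N (q (S (S i)))).
Proof.
  apply (cross_sign_consecutive _ _ _ (v i) (v (S i))); auto.
  set (d := vsub (q (S (S i))) (q (S i))).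
  assert (Hv : v i <> vzero).
  { intros Hz. pose proof (Hrise i) as H. rewrite Hz in H. unfold dot, vzero in H; simpl in H. lra. }
  assert (Hd : d <> vzero).
  { intros Hz. assert (Heq : q (S (S i)) = q (S i)).
    { unfold d, vsub, vzero in Hz. injection Hz; intros. apply pt_ext; lra. }
    pose proof (Htight (S i) (S i) Heq). pose proof (Hrise (S i)). lra. }
  assert (Hpar : d = vscale (dot d (v i) / dot (v i) (v i)) (v i))
    by (apply (perp_parallel (N (q (S i)))); auto).
  set (lam := dot d (v i) / dot (v i) (v i)) in Hpar.
  assert (Hlam : 0 < lam).
  { pose proof (Hsupp i (q (S (S i))) (HP _)) as H1. pose proof (Hside i) as H2.
    assert (H3 : 0 <= dot (N (q i)) d) by (unfold d; rewrite dot_vsub in *; lra).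
    rewrite Hpar, dot_vscale in H3. pose proof (Hrise i).
    destruct (Rle_lt_or_eq_dec 0 lam) as [|H0]; [nra|assumption|].
    exfalso. apply Hd. rewrite Hpar, <- H0. vec_ring. }
  pose proof (Hsupp (S (S i)) (q (S i)) (HP _)) as H4.
  assert (H5 : dot (N (q (S (S i)))) d <= 0) by (unfold d; rewrite dot_vsub in *; lra).
  rewrite Hpar, dot_vscale in H5. nra.
Qed.

Lemma normal_chain_oriented :
  (forall i, 0 < cross (N (q i)) (N (q (S i)))) \/ (forall i, cross (N (q i)) (N (q (S i))) < 0).
Proof.
  set (c := fun i => cross (N (q i)) (N (q (S i)))).
  assert (Hc : forall i, 0 < c 0%nat * c i).
  { induction i as [|i IH].
    - pose proof (normal_chain_turns 0). apply sqr_pos. intro H0. unfold c in H0. nra.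
    - pose proof (normal_chain_turns i). fold (c i) (c (S i)) in *. nra. }
  destruct (Rlt_dec 0 (c 0%nat)) as [Hp|Hp]; [left|right]; intro i; specialize (Hc i);
    fold (c i); nra.
Qed.

Lemma normal_chain_meets y w : P y -> w <> vzero -> (forall p, P p -> 0 <= dot w (vsub p y)) ->
  exists i, dot (N (q i)) (vsub y (q i)) = 0.
Proof.
  intros Hy Hw Hwy.
  destruct (pigeonhole q L Hfin) as [a [b [Hab Hqab]]].
  destruct (winding (fun i => N (q i)) a b Hab (f_equal N (eq_sym Hqab))) with (w := w)
    as [i [_ [al [be [Hal [Hbe Hwab]]]]]].
  { destruct normal_chain_oriented as [H|H]; [left|right]; intros j _; apply H. }
  assert (HX : 0 <= dot (N (q i)) (vsub y (q (S i)))).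
  { pose proof (Hsupp i y Hy). pose proof (Hside i). rewrite dot_vsub in *. lra. }
  assert (HY : 0 <= dot (N (q (S i))) (vsub y (q (S i)))) by apply Hsupp, Hy.
  assert (HW : dot w (vsub (q (S i)) y)
               = - (al * dot (N (q i)) (vsub y (q (S i))) + be * dot (N (q (S i))) (vsub y (q (S i))))).
  { rewrite Hwab. unfold dot, vsub, vadd, vscale; simpl. ring. }
  pose proof (Hwy (q (S i)) (HP _)).
  destruct (Rlt_dec 0 al) as [Hal'|Hal'].
  - assert (HX0 : dot (N (q i)) (vsub y (q (S i))) = 0) by nra.
    exists i. pose proof (Hside i). rewrite dot_vsub in *. lra.
  - destruct (Rlt_dec 0 be) as [Hbe'|Hbe'].
    + exists (S i). nra.
    + exfalso. apply Hw. rewrite Hwab. replace al with 0 by lra. replace be with 0 by lra. vec_ring.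
Qed.

End NormalChain.

(** * Cones and Farkas' lemma *)

Fixpoint in_cone (D : list pt) (u : pt) : Prop :=
  match D with
  | [] => u = vzero
  | d :: D' => exists c, 0 <= c /\ in_cone D' (vsub u (vscale c d))
  end.

Lemma in_cone_proj (k : pt -> R) d D z : (forall x, In x D -> 0 <= k x) ->
  in_cone (map (fun x => vadd x (vscale (k x) d)) D) z ->
  exists y mu, in_cone D y /\ 0 <= mu /\ z = vadd y (vscale mu d).
Proof.
  revert z; induction D as [|a D IH]; simpl; intros z Hk Hz.
  - exists vzero, 0. split; [reflexivity|split; [lra|]]. subst; vec_ring.
  - destruct Hz as [c [Hc Hz]].
    destruct (IH _ (fun x Hx => Hk x (or_intror Hx)) Hz) as [y [mu [Hy [Hmu Hyz]]]].
    exists (vadd y (vscale c a)), (mu + c * k a). split; [|split].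
    + exists c. split; auto. replace (vsub (vadd y (vscale c a)) (vscale c a)) with y by vec_ring. exact Hy.
    + pose proof (Hk a (or_introl eq_refl)). nra.
    + apply (f_equal (fun p => vadd p (vscale c (vadd a (vscale (k a) d))))) in Hyz.
      replace (vadd (vsub z _) _) with z in Hyz by vec_ring. rewrite Hyz. vec_ring.
Qed.

Lemma farkas D u :
  in_cone D u \/ exists w, (forall d, In d D -> 0 <= dot w d) /\ dot w u < 0.
Proof.
  remember (length D) as n eqn:Hn. revert D u Hn.
  induction n as [|n IH]; intros [|d D] u Hn; try discriminate.
  - destruct (pt_eq_dec u vzero) as [Hz|Hz]; [left; exact Hz|right].
    exists (vscale (-1) u). split; [intros _ []|].
    rewrite dot_comm, dot_vscale. pose proof (dot_self_pos u Hz). lra.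
  - injection Hn as Hn.
    destruct (IH D u Hn) as [Hc | [w1 [Hw1 Hw1u]]].
    { left. exists 0. split; [lra|]. replace (vsub u (vscale 0 d)) with u by vec_ring. exact Hc. }
    destruct (Rle_dec 0 (dot w1 d)) as [Hd|Hd].
    { right. exists w1. split; auto. intros x [<-|Hx]; auto. }
    (* Eliminate [d] by projecting along it onto the line [dot w1 _ = 0]. *)
    assert (Hne : dot w1 d <> 0) by lra.
    set (k := fun x => - dot w1 x / dot w1 d).
    set (proj := fun x => vadd x (vscale (k x) d)).
    assert (Hk : forall x, In x D -> 0 <= k x).
    { intros x Hx. pose proof (Hw1 x Hx). unfold k, Rdiv.
      pose proof (Rinv_lt_0_compat (dot w1 d) ltac:(lra)). nra. }
    assert (Hku : k u < 0).
    { unfold k, Rdiv. pose proof (Rinv_lt_0_compat (dot w1 d) ltac:(lra)). nra. }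
    destruct (IH (map proj D) (proj u) ltac:(rewrite length_map; exact Hn))
      as [Hc | [w2 [Hw2 Hw2u]]].
    + left. destruct (in_cone_proj k d D (proj u) Hk Hc) as [y [mu [Hy [Hmu Hpu]]]].
      exists (mu - k u). split; [lra|].
      replace (vsub u (vscale (mu - k u) d)) with (vsub (proj u) (vscale mu d)).
      * rewrite Hpu. replace (vsub (vadd y (vscale mu d)) (vscale mu d)) with y by vec_ring. exact Hy.
      * unfold proj. vec_ring.
    + right. exists (vsub w2 (vscale (dot w2 d / dot w1 d) w1)).
      assert (Hproj : forall x, dot (vsub w2 (vscale (dot w2 d / dot w1 d) w1)) x = dot w2 (proj x)).
      { intro x. unfold proj, k. unfold dot, vadd, vsub, vscale in *; simpl in *. field. exact Hne. }
      split.
      * intros x [<-|Hx].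
        -- right. unfold dot, vsub, vscale in *; simpl in *. field. exact Hne.
        -- rewrite Hproj. apply Hw2, in_map, Hx.
      * rewrite Hproj. exact Hw2u.
Qed.

Definition comb (L : list pt) (s : pt) (c : pt -> R) : pt :=
  psum L (fun u => vscale (c u) (vsub u s)).

Definition cone_at (L : list pt) (s x : pt) : Prop :=
  exists c, (forall u, In u L -> 0 <= c u) /\ x = comb L s c.

Definition upd (c : pt -> R) (a : pt) (v : R) : pt -> R :=
  fun u => if pt_eq_dec u a then v else c u.

Lemma comb_add L s c1 c2 : vadd (comb L s c1) (comb L s c2) = comb L s (fun u => c1 u + c2 u).
Proof. unfold comb. rewrite <- psum_add. apply psum_ext. intros; vec_ring. Qed.

Lemma comb_scale L s a c : vscale a (comb L s c) = comb L s (fun u => a * c u).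
Proof. unfold comb. rewrite <- psum_scale. apply psum_ext. intros; vec_ring. Qed.

Lemma dot_comb L s c w : dot w (comb L s c) = lsum L (fun u => c u * dot w (vsub u s)).
Proof. unfold comb. rewrite dot_psum. apply lsum_ext. intros; apply dot_vscale. Qed.

Lemma comb_expand L s c : comb L s c = vsub (psum L (fun u => vscale (c u) u)) (vscale (lsum L c) s).
Proof. unfold comb. induction L as [|a L IH]; simpl; [|rewrite IH]; vec_ring. Qed.

Lemma comb_remove L s c u : NoDup L -> In u L ->
  vsub (comb L s c) (vscale (c u) (vsub u s)) = comb L s (upd c u 0).
Proof.
  intros Hnd Hu. unfold comb. rewrite (psum_split_at pt_eq_dec L u) by assumption.
  rewrite (psum_split_at pt_eq_dec L u (fun v => vscale (upd c u 0 v) (vsub v s))) by assumption.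
  rewrite (psum_ext L (fun v => if pt_eq_dec v u then vzero else vscale (upd c u 0 v) (vsub v s))
                      (fun v => if pt_eq_dec v u then vzero else vscale (c v) (vsub v s))).
  - unfold upd. destruct (pt_eq_dec u u); [vec_ring|congruence].
  - intros v _. unfold upd. destruct (pt_eq_dec v u); reflexivity.
Qed.

Lemma comb_indicator L s t a : NoDup L -> In t L ->
  comb L s (fun u => if pt_eq_dec u t then a else 0) = vscale a (vsub t s).
Proof.
  intros Hnd Ht. unfold comb. rewrite (psum_split_at pt_eq_dec L t) by assumption.
  rewrite psum_zero; [destruct (pt_eq_dec t t); [vec_ring|congruence]|].
  intros u _. destruct (pt_eq_dec u t); [reflexivity|vec_ring].
Qed.

Lemma cone_at_of_in_cone L s x : NoDup L -> in_cone (map (fun u => vsub u s) L) x -> cone_at L s x.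
Proof.
  revert x; induction L as [|a L IH]; simpl; intros x Hnd Hx.
  - exists (fun _ => 0). split; [intros _ []|exact Hx].
  - inversion Hnd as [|? ? HaL HL]; subst. destruct Hx as [c0 [Hc0 Hx]].
    destruct (IH _ HL Hx) as [c [Hc Hxc]].
    exists (upd c a c0). unfold upd. split.
    + intros u Hu. destruct (pt_eq_dec u a) as [->|Hua]; [exact Hc0|].
      destruct Hu as [->|Hu]; [contradiction|auto].
    + unfold comb; simpl. destruct (pt_eq_dec a a); [|congruence].
      rewrite (psum_ext L _ (fun u => vscale (c u) (vsub u s))).
      * fold (comb L s c). rewrite <- Hxc. vec_ring.
      * intros u Hu. destruct (pt_eq_dec u a) as [->|]; [contradiction|reflexivity].
Qed.

Lemma cone_at_zero L s : cone_at L s vzero.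
Proof.
  exists (fun _ => 0). split; [intros; lra|].
  symmetry. apply psum_zero. intros; vec_ring.
Qed.

Lemma cone_at_add L s x y : cone_at L s x -> cone_at L s y -> cone_at L s (vadd x y).
Proof.
  intros [c1 [h1 ->]] [c2 [h2 ->]]. exists (fun u => c1 u + c2 u). split.
  - intros u Hu. specialize (h1 u Hu). specialize (h2 u Hu). lra.
  - apply comb_add.
Qed.

Lemma cone_at_scale L s x a : 0 <= a -> cone_at L s x -> cone_at L s (vscale a x).
Proof.
  intros Ha [c [h ->]]. exists (fun u => a * c u). split.
  - intros u Hu. specialize (h u Hu). nra.
  - apply comb_scale.
Qed.

Lemma cone_at_gen L s u : NoDup L -> In u L -> cone_at L s (vsub u s).
Proof.
  intros Hnd Hu. exists (fun v => if pt_eq_dec v u then 1 else 0). split.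
  - intros v _. destruct (pt_eq_dec v u); lra.
  - rewrite comb_indicator by assumption. vec_ring.
Qed.

Lemma cone_at_psum {A} (l : list A) f L s : (forall x, In x l -> cone_at L s (f x)) ->
  cone_at L s (psum l f).
Proof.
  induction l; simpl; intros H; [apply cone_at_zero|].
  apply cone_at_add; auto.
Qed.

(** * Supported sources and their targets *)

Definition asbool (P : Prop) : bool := if excluded_middle_informative P then true else false.

Lemma asbool_true P : asbool P = true <-> P.
Proof. unfold asbool; destruct (excluded_middle_informative P); split; congruence || tauto. Qed.

Lemma asbool_false P : asbool P = false <-> ~ P.
Proof. unfold asbool; destruct (excluded_middle_informative P); split; congruence || tauto. Qed.

Definition supporting (E : list edge) (w y : pt) : Prop :=
  forall u, In u (map src E) -> 0 <= dot w (vsub u y).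

Definition supported (E : list edge) (y : pt) : Prop :=
  exists w, w <> vzero /\ supporting E w y.

Definition supported_sources (E : list edge) : list pt :=
  filter (fun y => asbool (supported E y)) (nodup pt_eq_dec (map src E)).

Definition out_edges (E : list edge) (s : pt) : list edge :=
  filter (fun e => asbool (src e = s)) E.

Definition out_vec (E : list edge) (s : pt) : pt := psum (out_edges E s) rvec.

Definition is_target (E : list edge) (s t : pt) : Prop :=
  t <> s /\ exists eps, 0 < eps /\
    cone_at (supported_sources E) s (vsub (out_vec E s) (vscale eps (vsub t s))).

Definition targets (E : list edge) (s : pt) : list pt :=
  filter (fun t => asbool (is_target E s t)) (supported_sources E).

Definition tight_normal (E : list edge) (s w : pt) : Prop :=
  w <> vzero /\ supporting E w s /\ forall e, In e E -> src e = s -> dot w (rvec e) = 0.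

Lemma supported_sources_In E u : In u (supported_sources E) <-> In u (map src E) /\ supported E u.
Proof. unfold supported_sources. rewrite filter_In, nodup_In, asbool_true. tauto. Qed.

Lemma supported_sources_NoDup E : NoDup (supported_sources E).
Proof. apply NoDup_filter, NoDup_nodup. Qed.

Lemma out_edges_In E s e : In e (out_edges E s) <-> In e E /\ src e = s.
Proof. unfold out_edges. rewrite filter_In, asbool_true. tauto. Qed.

Lemma targets_In E s t : In t (targets E s) <-> In t (supported_sources E) /\ is_target E s t.
Proof. unfold targets. rewrite filter_In, asbool_true. tauto. Qed.

Lemma targets_NoDup E s : NoDup (targets E s).
Proof. apply NoDup_filter, supported_sources_NoDup. Qed.

Lemma supported_of_tight E s w p : tight_normal E s w -> In p (map src E) ->
  dot w (vsub p s) = 0 -> In p (supported_sources E).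
Proof.
  intros [Hw [Hws _]] Hp Hd. apply supported_sources_In. split; auto.
  exists w. split; auto. intros u Hu. specialize (Hws u Hu). rewrite dot_vsub in *. lra.
Qed.

Section Realization.
Variable E : list edge.
Hypothesis HN : is_network E.
Hypothesis HSE : strongly_endotactic E.

Lemma rvec_neq0 e : In e E -> rvec e <> vzero.
Proof. intros He. apply vsub_neq0, not_eq_sym, HN, He. Qed.

Lemma supporting_of_supported_sources w s :
  (forall t, In t (supported_sources E) -> 0 <= dot w (vsub t s)) -> supporting E w s.
Proof.
  intros H u Hu.
  destruct (pt_eq_dec w vzero) as [->|Hw]; [rewrite dot_zero_l; lra|].
  destruct (exists_min_dot (map src E) w) as [m [Hm Hmin]].
  { intro Hm. apply HN, (map_eq_nil _ _ Hm). }
  assert (HmS : In m (supported_sources E)).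
  { apply supported_sources_In. split; auto. exists w. split; auto.
    intros v Hv. rewrite dot_vsub. specialize (Hmin v Hv). lra. }
  specialize (H m HmS). specialize (Hmin u Hu). rewrite dot_vsub in *. lra.
Qed.

Lemma out_rvec_nonneg w s e : supporting E w s -> In e E -> src e = s -> 0 <= dot w (rvec e).
Proof.
  intros Hs He Hse. apply Rnot_lt_le. intro Hlt.
  destruct (HSE w e He Hlt) as [ej [Hej [Hlow _]]].
  specialize (Hs (src ej) (in_map src E ej Hej)). subst. lra.
Qed.

Lemma rvec_in_cone s e : In e E -> src e = s ->
  cone_at (supported_sources E) s (rvec e).
Proof.
  intros He Hse.
  destruct (farkas (map (fun u => vsub u s) (supported_sources E)) (rvec e)) as [Hc|[w [Hw Hwe]]].
  - apply cone_at_of_in_cone; [apply supported_sources_NoDup|exact Hc].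
  - exfalso.
    assert (Hsupp : supporting E w s).
    { apply supporting_of_supported_sources. intros t Ht.
      apply Hw, (in_map (fun u => vsub u s)), Ht. }
    pose proof (out_rvec_nonneg w s e Hsupp He Hse). lra.
Qed.

Lemma out_vec_in_cone s : cone_at (supported_sources E) s (out_vec E s).
Proof.
  apply cone_at_psum. intros e He. apply out_edges_In in He as [He Hse].
  apply rvec_in_cone; auto.
Qed.

(* A positive coefficient at [u] exhibits [u] as a target of [s]. *)
Lemma cone_at_targets s x : cone_at (supported_sources E) s x ->
  cone_at (supported_sources E) s (vsub (out_vec E s) x) -> cone_at (targets E s) s x.
Proof.
  intros [c [Hc ->]] Hrest.
  assert (Hpos : forall u, In u (supported_sources E) -> u <> s -> 0 < c u -> In u (targets E s)).
  { intros u Hu Hus Hcu. apply targets_In. split; [exact Hu|]. split; [exact Hus|].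
    exists (c u). split; [exact Hcu|].
    replace (vsub (out_vec E s) (vscale (c u) (vsub u s)))
      with (vadd (vsub (out_vec E s) (comb (supported_sources E) s c))
                 (vsub (comb (supported_sources E) s c) (vscale (c u) (vsub u s)))) by vec_ring.
    apply cone_at_add; [exact Hrest|].
    rewrite comb_remove by (auto using supported_sources_NoDup).
    exists (upd c u 0). split; [|reflexivity].
    intros v Hv. unfold upd. destruct (pt_eq_dec v u); [lra|auto]. }
  exists c. split; [intros u Hu; apply Hc, (proj1 (proj1 (targets_In E s u) Hu))|].
  unfold comb at 1. rewrite (psum_filter _ (fun t => asbool (is_target E s t))).
  rewrite (psum_zero (filter (fun x => negb (asbool (is_target E s x))) _)); [unfold targets, comb; vec_ring|].
  intros u Hu. apply filter_In in Hu as [Hu Hnt].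
  apply Bool.negb_true_iff, asbool_false in Hnt.
  destruct (pt_eq_dec u s) as [->|Hus]; [vec_ring|].
  destruct (Rle_lt_or_eq_dec _ _ (Hc u Hu)) as [Hcu|<-]; [|vec_ring].
  exfalso. apply Hnt, targets_In, Hpos; auto.
Qed.

Lemma rvec_in_target_cone s e : In e E -> src e = s -> cone_at (targets E s) s (rvec e).
Proof.
  intros He Hse. apply cone_at_targets; [apply rvec_in_cone; auto|].
  assert (Hnd : NoDup (out_edges E s)) by (apply NoDup_filter, HN).
  unfold out_vec. rewrite (psum_split_at edge_eq_dec _ e) by (auto; apply out_edges_In; auto).
  set (rest := psum (out_edges E s) (fun u => if edge_eq_dec u e then vzero else rvec u)).
  replace (vsub (vadd (rvec e) rest) (rvec e)) with rest by vec_ring.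
  apply cone_at_psum. intros e' He'. destruct (edge_eq_dec e' e); [apply cone_at_zero|].
  apply out_edges_In in He' as [He' Hs']. apply rvec_in_cone; auto.
Qed.

Lemma targets_nonempty s : In s (supported_sources E) -> targets E s <> [].
Proof.
  intros Hs Ht. apply supported_sources_In in Hs as [Hs _].
  apply in_map_iff in Hs as [e [Hse He]].
  destruct (rvec_in_target_cone s e He Hse) as [c [_ Hc]].
  apply (rvec_neq0 e He). rewrite Hc, Ht. reflexivity.
Qed.

Lemma out_vec_pos_on_targets s l : incl l (targets E s) ->
  exists r, (forall t, In t (targets E s) -> 0 <= r t) /\ (forall t, In t l -> 0 < r t) /\
    out_vec E s = comb (targets E s) s r.
Proof.
  induction l as [|t l IH]; intros Hl.
  - destruct (cone_at_targets s (out_vec E s)) as [r [Hr Heq]].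
    + apply out_vec_in_cone.
    + replace (vsub (out_vec E s) (out_vec E s)) with vzero by vec_ring. apply cone_at_zero.
    + exists r. split; [exact Hr|split; [intros _ []|exact Heq]].
  - destruct IH as [r1 [Hr1 [Hr1l Heq1]]]; [intros u Hu; apply Hl; right; exact Hu|].
    assert (Ht : In t (targets E s)) by (apply Hl; left; reflexivity).
    pose proof Ht as Ht'. apply targets_In in Ht' as [HtS [_ [eps [Heps Hc]]]].
    destruct (cone_at_targets s _ Hc) as [r2 [Hr2 Heq2]].
    { replace (vsub (out_vec E s) (vsub (out_vec E s) (vscale eps (vsub t s))))
        with (vscale eps (vsub t s)) by vec_ring.
      apply cone_at_scale; [lra|]. apply cone_at_gen; auto using supported_sources_NoDup. }
    set (ind := fun u => if pt_eq_dec u t then eps else 0).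
    exists (fun u => / 2 * (r1 u + (ind u + r2 u))).
    assert (Hind : forall u, 0 <= ind u) by (intro u; unfold ind; destruct (pt_eq_dec u t); lra).
    split; [|split].
    + intros u Hu. specialize (Hr1 u Hu). specialize (Hr2 u Hu). specialize (Hind u). lra.
    + intros u [<-|Hu].
      * pose proof (Hr1 t Ht). pose proof (Hr2 t Ht).
        unfold ind. destruct (pt_eq_dec t t); [lra|congruence].
      * pose proof (Hr1l u Hu). pose proof (Hr2 u (Hl u (or_intror Hu))). pose proof (Hind u). lra.
    + rewrite <- comb_scale, <- !comb_add, <- Heq1, <- Heq2.
      unfold ind. rewrite comb_indicator by auto using targets_NoDup. vec_field.
Qed.

Lemma out_vec_pos_targets s :
  exists r, (forall t, In t (targets E s) -> 0 < r t) /\ out_vec E s = comb (targets E s) s r.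
Proof.
  destruct (out_vec_pos_on_targets s (targets E s) (incl_refl _)) as [r [_ [Hr Heq]]].
  exists r. auto.
Qed.

(* With [m <= k e <= M], the flux is [m] times the unit-rate flux plus a remainder [z] such
   that [out_vec E s - z / M] still lies in the cone. *)
Lemma flux_pos_targets s k : pos_rates E k ->
  exists r, (forall t, In t (targets E s) -> 0 < r t) /\
    psum (out_edges E s) (fun e => vscale (k e) (rvec e)) = comb (targets E s) s r.
Proof.
  intros Hk.
  assert (Hks : forall e, In e (out_edges E s) -> 0 < k e)
    by (intros e He; apply out_edges_In in He; apply Hk; tauto).
  destruct (exists_pos_lower_bound _ _ Hks) as [m [Hm Hme]].
  destruct (exists_pos_upper_bound (out_edges E s) k) as [M [HM HMe]].
  set (z := psum (out_edges E s) (fun e => vscale (k e - m) (rvec e))).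
  destruct (cone_at_targets s (vscale (/ M) z)) as [c [Hc Hz]].
  - apply cone_at_scale; [left; apply Rinv_0_lt_compat; exact HM|].
    apply cone_at_psum. intros e He. pose proof (Hme e He).
    apply out_edges_In in He as [He Hse]. apply cone_at_scale; [lra|apply rvec_in_cone; auto].
  - unfold z, out_vec. rewrite <- psum_scale, <- psum_sub. apply cone_at_psum.
    intros e He. pose proof (Hme e He). pose proof (HMe e He).
    apply out_edges_In in He as [He Hse].
    replace (vsub (rvec e) (vscale (/ M) (vscale (k e - m) (rvec e))))
      with (vscale ((M - (k e - m)) / M) (rvec e)) by (vec_field; lra).
    apply cone_at_scale; [|apply rvec_in_cone; auto].
    unfold Rdiv. apply Rmult_le_pos; [lra|left; apply Rinv_0_lt_compat, HM].
  - destruct (out_vec_pos_targets s) as [r [Hr Heq]].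
    exists (fun t => m * r t + M * c t). split.
    + intros t Ht. specialize (Hr t Ht). specialize (Hc t Ht). nra.
    + rewrite <- comb_add, <- !comb_scale, <- Heq, <- Hz.
      replace (vscale M (vscale (/ M) z)) with z by (vec_field; lra).
      unfold z, out_vec. rewrite <- psum_scale, <- psum_add. apply psum_ext. intros; vec_ring.
Qed.

End Realization.

(** * Weak reversibility of the target graph *)

Lemma reach_snoc (P : edge -> Prop) a e : reach P a (src e) -> P e -> reach P a (tgt e).
Proof.
  remember (src e) as b eqn:Hb. intros H. revert Hb.
  induction H as [a|e' b He' H IH]; intros Hb He.
  - subst. apply reach_step; [exact He|apply reach_refl].
  - apply reach_step; auto.
Qed.

Lemma reach_mono (P Q : edge -> Prop) a b : (forall e, P e -> Q e) -> reach P a b -> reach Q a b.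
Proof. intros HPQ H. induction H; [apply reach_refl|apply reach_step; auto]. Qed.

Definition new_edge (E : list edge) (e : edge) : Prop :=
  In (src e) (supported_sources E) /\ In (tgt e) (targets E (src e)).

Lemma reach_new_edge_supported E a b : reach (new_edge E) a b ->
  In a (supported_sources E) -> In b (supported_sources E).
Proof.
  intros H. induction H as [|e b [_ He] H IH]; auto.
  intros _. apply IH. apply targets_In in He. tauto.
Qed.

Section Reversibility.
Variable E : list edge.
Hypothesis HN : is_network E.
Hypothesis HSE : strongly_endotactic E.
Hypothesis H2 : stoich_two_dim E.

Lemma tight_out_edge_against s w d : In s (map src E) -> tight_normal E s w ->
  d <> vzero -> dot w d = 0 -> dot d (out_vec E s) <= 0 ->
  exists e, In e E /\ src e = s /\ dot d (rvec e) < 0.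
Proof.
  intros Hs [Hw0 [_ Hwr]] Hd0 Hwd Hdv. apply NNPP. intro Hno.
  assert (Hall : forall e, In e (out_edges E s) -> 0 <= dot d (rvec e)).
  { intros e He. apply out_edges_In in He as [He Hse].
    apply Rnot_lt_le. intro. apply Hno. exists e; auto. }
  assert (Hsum : lsum (out_edges E s) (fun e => dot d (rvec e)) = 0).
  { pose proof (lsum_nonneg _ _ Hall). unfold out_vec in Hdv. rewrite dot_psum in Hdv. lra. }
  apply in_map_iff in Hs as [e0 [Hse0 He0]].
  (* [rvec e0] is orthogonal to both [w] and [d], hence zero. *)
  assert (He0d : rvec e0 = vscale (dot (rvec e0) d / dot d d) d)
    by (apply (perp_parallel w); auto).
  assert (Hd0e : dot d (rvec e0) = 0)
    by (apply (lsum_eq0_nonneg _ _ Hall Hsum), out_edges_In; auto).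
  apply (rvec_neq0 E HN e0 He0). rewrite He0d, (dot_comm (rvec e0) d), Hd0e.
  unfold Rdiv. rewrite Rmult_0_l. vec_ring.
Qed.

Lemma supported_source_against s w d e : tight_normal E s w -> d <> vzero -> dot w d = 0 ->
  In e E -> src e = s -> dot d (rvec e) < 0 ->
  exists u kap, In u (supported_sources E) /\ kap < 0 /\ vsub u s = vscale kap d.
Proof.
  intros [Hw0 [Hws Hwr]] Hd0 Hwd He Hse Hde.
  pose proof (dot_self_pos d Hd0) as Hdd.
  destruct (rvec_in_cone E HN HSE s e He Hse) as [c [Hc Hx]].
  assert (Hdx := Hde). rewrite Hx, dot_comb in Hdx.
  apply lsum_neg_exists in Hdx as [u [Hu Hcu]].
  assert (Hdu : dot d (vsub u s) < 0).
  { pose proof (Hc u Hu). destruct (Rle_lt_or_eq_dec _ _ (Hc u Hu)) as [|H0]; [nra|].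
    rewrite <- H0 in Hcu. lra. }
  assert (Hcu0 : 0 < c u) by (pose proof (Hc u Hu); nra).
  assert (Hwu : dot w (vsub u s) = 0).
  { assert (Hwe : dot w (rvec e) = 0) by auto.
    rewrite Hx, dot_comb in Hwe.
    assert (Hall : forall v, In v (supported_sources E) -> 0 <= c v * dot w (vsub v s)).
    { intros v Hv. apply Rmult_le_pos; auto. apply Hws, supported_sources_In, Hv. }
    pose proof (lsum_eq0_nonneg _ _ Hall Hwe u Hu) as H0.
    apply Rmult_integral in H0 as [H0|H0]; [lra|exact H0]. }
  exists u, (dot (vsub u s) d / dot d d). split; [exact Hu|split].
  - unfold Rdiv. rewrite dot_comm. pose proof (Rinv_0_lt_compat _ Hdd). nra.
  - apply (perp_parallel w); auto.
Qed.

Lemma in_targets_of_tight s w t : In s (map src E) -> tight_normal E s w ->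
  In t (supported_sources E) -> t <> s -> dot w (vsub t s) = 0 -> In t (targets E s).
Proof.
  intros Hs Hw Ht Hts Hwt.
  apply targets_In. split; [exact Ht|split; [exact Hts|]].
  set (d := vsub t s) in *.
  assert (Hd0 : d <> vzero) by (apply vsub_neq0; auto).
  pose proof (dot_self_pos d Hd0) as Hdd.
  assert (Hwv : dot w (out_vec E s) = 0).
  { destruct Hw as [_ [_ Hwr]]. unfold out_vec. rewrite dot_psum, (lsum_ext _ _ (fun _ => 0)).
    - clear. induction (out_edges E s); simpl; lra.
    - intros e He. apply out_edges_In in He as [He Hse]. auto. }
  set (lam := dot (out_vec E s) d / dot d d).
  assert (Hvl : out_vec E s = vscale lam d) by (apply (perp_parallel w); try apply Hw; auto).
  destruct (Rlt_dec 0 lam) as [Hlam|Hlam].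
  { exists lam. split; [exact Hlam|]. rewrite Hvl.
    replace (vsub (vscale lam d) (vscale lam d)) with vzero by vec_ring. apply cone_at_zero. }
  destruct (tight_out_edge_against s w d Hs Hw Hd0 Hwt) as [e [He [Hse Hde]]].
  { rewrite Hvl, dot_vscale. nra. }
  destruct (supported_source_against s w d e Hw Hd0 Hwt He Hse Hde) as [u [kap [Hu [Hkap Hul]]]].
  exists 1. split; [lra|].
  replace (vsub (out_vec E s) (vscale 1 d)) with (vscale ((lam - 1) / kap) (vsub u s))
    by (rewrite Hul, Hvl; vec_field; lra).
  apply cone_at_scale.
  - unfold Rdiv. pose proof (Rinv_lt_0_compat _ Hkap). nra.
  - apply cone_at_gen; auto using supported_sources_NoDup.
Qed.

(* By Farkas' lemma, either [s - t] lies in the cone of [- out_vec E s] and of the [u - s],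
   or a separating vector is a tight normal at [s]. *)
Lemma in_targets_of_not_tight s t : ~ (exists w, tight_normal E s w) ->
  In t (supported_sources E) -> t <> s -> In t (targets E s).
Proof.
  intros Hnt Ht Hts.
  apply targets_In. split; [exact Ht|split; [exact Hts|]].
  destruct (farkas (vscale (-1) (out_vec E s) :: map (fun u => vsub u s) (supported_sources E))
                   (vscale (-1) (vsub t s))) as [[tau [Htau Hc]] | [w [Hw Hwt]]].
  - apply cone_at_of_in_cone in Hc; [|apply supported_sources_NoDup].
    destruct (Rle_lt_or_eq_dec _ _ Htau) as [Htau'|<-].
    + exists (/ tau). split; [apply Rinv_0_lt_compat, Htau'|].
      replace (vsub (out_vec E s) (vscale (/ tau) (vsub t s)))
        with (vscale (/ tau) (vsub (vscale (-1) (vsub t s)) (vscale tau (vscale (-1) (out_vec E s)))))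
        by (vec_field; lra).
      apply cone_at_scale; [left; apply Rinv_0_lt_compat, Htau'|exact Hc].
    + exists 1. split; [lra|].
      replace (vsub (out_vec E s) (vscale 1 (vsub t s)))
        with (vadd (out_vec E s) (vsub (vscale (-1) (vsub t s)) (vscale 0 (vscale (-1) (out_vec E s)))))
        by vec_ring.
      apply cone_at_add; [apply out_vec_in_cone; auto|exact Hc].
  - exfalso. apply Hnt. exists w.
    assert (Hsupp : supporting E w s).
    { apply (supporting_of_supported_sources E HN). intros u Hu.
      apply Hw. right. apply (in_map (fun u => vsub u s)), Hu. }
    assert (Hall : forall e, In e (out_edges E s) -> 0 <= dot w (rvec e)).
    { intros e He. apply out_edges_In in He as [He Hse]. eapply out_rvec_nonneg; eauto. }
    assert (Hsum : lsum (out_edges E s) (fun e => dot w (rvec e)) = 0).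
    { pose proof (Hw _ (or_introl eq_refl)) as H0. rewrite dot_vscale in H0.
      pose proof (lsum_nonneg _ _ Hall). unfold out_vec in H0. rewrite dot_psum in H0. lra. }
    split; [|split; [exact Hsupp|]].
    + intros ->. rewrite dot_zero_l in Hwt. lra.
    + intros e He Hse. apply (lsum_eq0_nonneg _ _ Hall Hsum), out_edges_In; auto.
Qed.

(* Since the reaction vectors span the plane, some reaction is not orthogonal to [w]. *)
Lemma exists_rising_edge w : w <> vzero ->
  exists e, In e E /\ (forall u, In u (map src E) -> dot w (src e) <= dot w u) /\ 0 < dot w (rvec e).
Proof.
  intros Hw.
  assert (Hrise : forall e0, In e0 E -> dot w (rvec e0) < 0 -> exists e, In e E /\
            (forall u, In u (map src E) -> dot w (src e) <= dot w u) /\ 0 < dot w (rvec e)).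
  { intros e0 He0 Hlt. destruct (HSE w e0 He0 Hlt) as [e [He [_ [Hpos Hmin]]]].
    exists e. split; [exact He|split; [|exact Hpos]].
    intros u Hu. apply in_map_iff in Hu as [ek [<- Hek]].
    specialize (Hmin ek Hek). rewrite dot_vsub in Hmin. lra. }
  destruct (H2 w) as [c Hc].
  pose proof (dot_self_pos w Hw) as Hww.
  rewrite Hc in Hww at 2. rewrite vsum_psum, dot_psum in Hww.
  apply lsum_pos_exists in Hww as [e0 [He0 Hp]]. rewrite dot_vscale in Hp.
  destruct (Rtotal_order (dot w (rvec e0)) 0) as [Hneg|[H0|Hpos]].
  - apply (Hrise e0); auto.
  - rewrite H0 in Hp. lra.
  - assert (Hlt : dot (vscale (-1) w) (rvec e0) < 0)
      by (unfold dot, vscale in *; simpl in *; lra).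
    destruct (HSE _ e0 He0 Hlt) as [e [He [_ [Hpos' _]]]].
    apply (Hrise e); auto. unfold dot, vscale in *; simpl in *; lra.
Qed.

(* Following, from each point of [R], a reaction that rises along its tight normal gives a
   walk whose normals wind around the origin, so some tight line of the walk passes
   through [y]. *)
Lemma tight_closed_contains_supported (R : pt -> Prop) t y : R t ->
  (forall u, R u -> In u (map src E)) ->
  (forall u, R u -> exists w, tight_normal E u w) ->
  (forall u w p, R u -> tight_normal E u w -> In p (map src E) -> dot w (vsub p u) = 0 -> R p) ->
  In y (supported_sources E) -> R y.
Proof.
  intros Ht HRsrc HRtight HRline Hy.
  assert (Hchoice : forall u, R u -> exists we : pt * edge, tight_normal E u (fst we) /\
            In (snd we) E /\ dot (fst we) (vsub (src (snd we)) u) = 0 /\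
            0 < dot (fst we) (rvec (snd we))).
  { intros u Hu. destruct (HRtight u Hu) as [w Hw]. pose proof Hw as [Hw0 [Hws _]].
    destruct (exists_rising_edge w Hw0) as [e [He [Hmin Hpos]]].
    exists (w, e). simpl. split; [exact Hw|split; [exact He|split; [|exact Hpos]]].
    specialize (Hmin u (HRsrc u Hu)). specialize (Hws (src e) (in_map src E e He)).
    rewrite dot_vsub in *. lra. }
  set (sel := fun u => epsilon (inhabits (vzero, (vzero, vzero))) (fun we : pt * edge =>
          tight_normal E u (fst we) /\ In (snd we) E /\ dot (fst we) (vsub (src (snd we)) u) = 0 /\
          0 < dot (fst we) (rvec (snd we)))).
  assert (Hsel : forall u, R u -> tight_normal E u (fst (sel u)) /\ In (snd (sel u)) E /\
            dot (fst (sel u)) (vsub (src (snd (sel u))) u) = 0 /\ 0 < dot (fst (sel u)) (rvec (snd (sel u))))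
    by (intros u Hu; apply epsilon_spec, Hchoice, Hu).
  set (q := fun i => Nat.iter i (fun u => src (snd (sel u))) t).
  assert (Hq : forall i, R (q i)).
  { induction i as [|i IH]; [exact Ht|].
    destruct (Hsel _ IH) as [Hw [He [Hd _]]].
    apply (HRline (q i) (fst (sel (q i)))); auto. exact (in_map src E _ He). }
  destruct (supported_sources_In E y) as [[Hysrc [wy [Hwy0 Hwy]]] _]; [exact Hy|].
  destruct (normal_chain_meets (fun p => In p (map src E)) (map src E)
              (fun u => fst (sel u)) q (fun i => rvec (snd (sel (q i)))))
    with (y := y) (w := wy) as [i Hi]; auto.
  - intro i. apply Hsel, Hq.
  - intros i p Hp. apply Hsel; auto.
  - intro i. apply Hsel, Hq.
  - intro i. apply Hsel, Hq.
  - intros i j Hij. destruct (Hsel _ (Hq i)) as [[_ [_ Htight]] _].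
    apply Htight; [apply Hsel, Hq|exact Hij].
  - apply (HRline (q i) (fst (sel (q i)))); auto. apply Hsel, Hq.
Qed.

(* The sources reachable from [t] are closed under targets; if [y] were not among them, none
   of them would lack a tight normal, and the walk along tight normals would reach [y]. *)
Lemma targets_reach_back y t : In y (supported_sources E) -> In t (targets E y) ->
  reach (new_edge E) t y.
Proof.
  intros Hy Ht. apply NNPP. intro Hny.
  set (R := fun u => reach (new_edge E) t u).
  assert (HtS : In t (supported_sources E)) by (apply targets_In in Ht; tauto).
  assert (HRS : forall u, R u -> In u (supported_sources E))
    by (intros u Hu; eapply reach_new_edge_supported; eauto).
  assert (HRsrc : forall u, R u -> In u (map src E))
    by (intros u Hu; apply HRS, supported_sources_In in Hu; tauto).
  assert (HRstep : forall u u', R u -> In u' (targets E u) -> R u').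
  { intros u u' Hu Hu'. apply (reach_snoc _ _ (u, u') Hu). split; [apply HRS|]; auto. }
  apply Hny, (tight_closed_contains_supported R t y); auto.
  - apply reach_refl.
  - intros u Hu. apply NNPP. intro Hnt. apply Hny.
    destruct (pt_eq_dec y u) as [->|Hyu]; [exact Hu|].
    apply (HRstep u y Hu), in_targets_of_not_tight; auto.
  - intros u w p Hu Hw Hp Hd. destruct (pt_eq_dec p u) as [->|Hpu]; [exact Hu|].
    apply (HRstep u p Hu), (in_targets_of_tight u w); auto.
    apply (supported_of_tight E u w); auto.
Qed.

End Reversibility.

(** * The convex hull of the source complexes *)

Definition in_scaled_hull (E : list edge) (m : R) (z : pt) : Prop :=
  exists c : edge -> R, (forall e, In e E -> 0 <= c e) /\ rsum E c = m /\
    z = vsum E (fun e => vscale (c e) (src e)).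

Section Hull.
Variable E : list edge.
Hypothesis Hnd : NoDup E.

Lemma scaled_hull_add m1 m2 z1 z2 : in_scaled_hull E m1 z1 -> in_scaled_hull E m2 z2 ->
  in_scaled_hull E (m1 + m2) (vadd z1 z2).
Proof.
  intros [c1 [h1 [<- ->]]] [c2 [h2 [<- ->]]]. exists (fun e => c1 e + c2 e). split; [|split].
  - intros e He. specialize (h1 e He). specialize (h2 e He). lra.
  - rewrite !rsum_lsum. apply lsum_add.
  - rewrite !vsum_psum, <- psum_add. apply psum_ext. intros; vec_ring.
Qed.

Lemma scaled_hull_scale a m z : 0 <= a -> in_scaled_hull E m z -> in_scaled_hull E (a * m) (vscale a z).
Proof.
  intros Ha [c [h [<- ->]]]. exists (fun e => a * c e). split; [|split].
  - intros e He. specialize (h e He). nra.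
  - rewrite !rsum_lsum. apply lsum_scale.
  - rewrite !vsum_psum, <- psum_scale. apply psum_ext. intros; vec_ring.
Qed.

Lemma scaled_hull_source u : In u (map src E) -> in_scaled_hull E 1 u.
Proof.
  intros Hu. apply in_map_iff in Hu as [e [<- He]].
  exists (fun e' => if edge_eq_dec e' e then 1 else 0). split; [|split].
  - intros e' _. destruct (edge_eq_dec e' e); lra.
  - rewrite rsum_lsum, (lsum_split_at edge_eq_dec E e) by assumption.
    destruct (edge_eq_dec e e) as [_|]; [|congruence].
    rewrite (lsum_ext _ _ (fun _ => 0)), lsum_zero; [ring|].
    intros e' _. destruct (edge_eq_dec e' e); reflexivity.
  - rewrite vsum_psum, (psum_split_at edge_eq_dec E e) by assumption.
    destruct (edge_eq_dec e e) as [_|]; [|congruence].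
    rewrite psum_zero; [vec_ring|]. intros e' _. destruct (edge_eq_dec e' e); [|vec_ring]; reflexivity.
Qed.

Lemma scaled_hull_psum {A} (l : list A) (p : A -> pt) (c : A -> R) :
  (forall x, In x l -> In (p x) (map src E)) -> (forall x, In x l -> 0 <= c x) ->
  in_scaled_hull E (lsum l c) (psum l (fun x => vscale (c x) (p x))).
Proof.
  induction l as [|a l IH]; simpl; intros Hp Hc.
  - exists (fun _ => 0). split; [intros; lra|split].
    + rewrite rsum_lsum. apply lsum_zero.
    + rewrite vsum_psum, psum_zero; [reflexivity|]. intros; vec_ring.
  - apply scaled_hull_add; [|apply IH; auto].
    replace (c a) with (c a * 1) at 1 by ring.
    apply scaled_hull_scale; auto. apply scaled_hull_source; auto.
Qed.

Lemma scaled_hull_lower_bound m z w b : (forall e, In e E -> b <= dot w (src e)) ->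
  in_scaled_hull E m z -> m * b <= dot w z.
Proof.
  intros Hb [c [Hc [<- ->]]]. rewrite rsum_lsum, vsum_psum, dot_psum.
  clear Hnd. induction E as [|a l IH]; simpl; [lra|].
  rewrite dot_vscale.
  pose proof (Hb a (or_introl eq_refl)). pose proof (Hc a (or_introl eq_refl)).
  pose proof (IH (fun e He => Hb e (or_intror He)) (fun e He => Hc e (or_intror He))). nra.
Qed.

Lemma supported_on_boundary y : In y (map src E) -> supported E y -> on_source_hull_boundary E y.
Proof.
  intros Hy [w [Hw Hs]]. split.
  - intros eps Heps. exists y. split; [apply scaled_hull_source, Hy|].
    unfold dist2, dot, vsub; simpl. nra.
  - intros [eps [Heps Hball]].
    pose proof (dot_self_pos w Hw) as HW.
    set (tau := eps / (1 + dot w w)).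
    assert (Htau : tau * (1 + dot w w) = eps) by (unfold tau; field; lra).
    assert (Htp : 0 < tau) by (unfold tau; apply Rdiv_lt_0_compat; lra).
    set (z := vsub y (vscale tau w)).
    assert (Hz : dist2 z y < eps * eps).
    { replace (dist2 z y) with (tau * tau * dot w w)
        by (unfold dist2, z, dot, vsub, vscale; simpl; ring).
      rewrite <- Htau. nra. }
    assert (Hlow : forall e, In e E -> dot w y <= dot w (src e)).
    { intros e He. specialize (Hs (src e) (in_map src E e He)). rewrite dot_vsub in Hs. lra. }
    pose proof (scaled_hull_lower_bound 1 z w (dot w y) Hlow (Hball z Hz)) as H.
    unfold z in H. rewrite dot_vsub, dot_vscale in H. nra.
Qed.

Lemma hull_contains_segment y d : In y (map src E) -> cone_at (nodup pt_eq_dec (map src E)) y d ->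
  exists delta, 0 < delta /\ forall t, 0 <= t <= delta -> in_scaled_hull E 1 (vadd y (vscale t d)).
Proof.
  intros Hy [c [Hc ->]].
  set (l := nodup pt_eq_dec (map src E)).
  pose proof (lsum_nonneg l c Hc) as HC.
  exists (/ (1 + lsum l c)). split; [apply Rinv_0_lt_compat; lra|].
  intros t [Ht0 Ht1].
  assert (HtC : t * lsum l c <= 1).
  { apply (Rmult_le_compat_r (lsum l c)) in Ht1; [|exact HC].
    apply (Rle_trans _ _ _ Ht1). apply (Rmult_le_reg_l (1 + lsum l c)); [lra|].
    rewrite <- Rmult_assoc, Rinv_r by lra. lra. }
  (* [y + t d] is the convex combination [(1 - t C) y + t sum_u c u u] with [C = sum_u c u]. *)
  replace (vadd y (vscale t (comb l y c)))
    with (vadd (vscale (1 - t * lsum l c) y) (vscale t (psum l (fun u => vscale (c u) u)))).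
  - replace 1 with ((1 - t * lsum l c) * 1 + t * lsum l c) at 1 by ring.
    apply scaled_hull_add; apply scaled_hull_scale; try lra.
    + apply scaled_hull_source, Hy.
    + apply scaled_hull_psum; [|exact Hc]. intros u Hu. apply nodup_In in Hu. exact Hu.
  - rewrite comb_expand. vec_ring.
Qed.

Lemma scaled_hull_ball y delta : 0 < delta ->
  (forall t, Rabs t <= delta -> in_scaled_hull E 1 (vadd y (vscale t (1, 0))) /\
                                 in_scaled_hull E 1 (vadd y (vscale t (0, 1)))) ->
  forall z, dist2 z y < (delta / 2) * (delta / 2) -> in_scaled_hull E 1 z.
Proof.
  intros Hdelta Haxes z Hz.
  set (a := fst z - fst y). set (b := snd z - snd y).
  assert (Hab : a * a + b * b < (delta / 2) * (delta / 2)) by exact Hz.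
  assert (Ha : Rabs (2 * a) <= delta) by (apply Rabs_le; nra).
  assert (Hb : Rabs (2 * b) <= delta) by (apply Rabs_le; nra).
  (* [z] is the midpoint of [y + 2a e1] and [y + 2b e2]. *)
  replace z with (vadd (vscale (/ 2) (vadd y (vscale (2 * a) (1, 0))))
                       (vscale (/ 2) (vadd y (vscale (2 * b) (0, 1)))))
    by (unfold a, b; destruct z; vec_field).
  replace 1 with (/ 2 * 1 + / 2 * 1) at 1 by field.
  apply scaled_hull_add; apply scaled_hull_scale; try lra; apply Haxes; assumption.
Qed.

Lemma boundary_supported y : In y (map src E) -> on_source_hull_boundary E y -> supported E y.
Proof.
  intros Hy [_ Hnb]. apply NNPP. intro Hns. apply Hnb.
  assert (Hdir : forall d, exists delta, 0 < delta /\
            forall t, 0 <= t <= delta -> in_scaled_hull E 1 (vadd y (vscale t d))).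
  { intro d. apply hull_contains_segment; [exact Hy|].
    destruct (farkas (map (fun u => vsub u y) (nodup pt_eq_dec (map src E))) d) as [Hc|[w [Hw Hwd]]].
    - apply cone_at_of_in_cone; [apply NoDup_nodup|exact Hc].
    - exfalso. apply Hns. exists w. split.
      + intros ->. rewrite dot_zero_l in Hwd. lra.
      + intros u Hu. apply Hw, (in_map (fun u => vsub u y)), nodup_In, Hu. }
  assert (Hline : forall d, exists delta, 0 < delta /\
            forall t, Rabs t <= delta -> in_scaled_hull E 1 (vadd y (vscale t d))).
  { intro d. destruct (Hdir d) as [d1 [Hd1 K1]], (Hdir (vscale (-1) d)) as [d2 [Hd2 K2]].
    exists (Rmin d1 d2). split; [apply Rmin_glb_lt; assumption|].
    intros t Ht. pose proof (Rmin_l d1 d2). pose proof (Rmin_r d1 d2).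
    destruct (Rle_lt_dec 0 t) as [Htp|Htn].
    - rewrite Rabs_pos_eq in Ht by exact Htp. apply K1. lra.
    - rewrite Rabs_left in Ht by exact Htn.
      replace (vadd y (vscale t d)) with (vadd y (vscale (- t) (vscale (-1) d))) by vec_ring.
      apply K2. lra. }
  destruct (Hline (1, 0)) as [d1 [Hd1 K1]], (Hline (0, 1)) as [d2 [Hd2 K2]].
  assert (Hm : 0 < Rmin d1 d2) by (apply Rmin_glb_lt; assumption).
  exists (Rmin d1 d2 / 2). split; [lra|].
  apply scaled_hull_ball; [exact Hm|].
  intros t Ht. pose proof (Rmin_l d1 d2). pose proof (Rmin_r d1 d2).
  split; [apply K1|apply K2]; lra.
Qed.

End Hull.

Lemma boundary_ext E E' : (forall z, in_source_hull E z <-> in_source_hull E' z) ->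
  forall y, on_source_hull_boundary E y <-> on_source_hull_boundary E' y.
Proof.
  intros H y. unfold on_source_hull_boundary.
  split; intros [H1 H2]; split.
  - intros eps He. destruct (H1 eps He) as [z [Hz Hd]]. exists z. rewrite <- H. auto.
  - intros [eps [He Hb]]. apply H2. exists eps. split; [exact He|]. intros z Hz. apply H, Hb, Hz.
  - intros eps He. destruct (H1 eps He) as [z [Hz Hd]]. exists z. rewrite H. auto.
  - intros [eps [He Hb]]. apply H2. exists eps. split; [exact He|]. intros z Hz. apply H, Hb, Hz.
Qed.

Lemma scaled_hull_incl E E' m z : NoDup E' -> (forall e, In e E -> In (src e) (map src E')) ->
  in_scaled_hull E m z -> in_scaled_hull E' m z.
Proof.
  intros Hnd Hsrc [c [Hc [<- ->]]]. rewrite rsum_lsum, vsum_psum.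
  apply scaled_hull_psum; assumption.
Qed.

(** * The rerouted network *)

Lemma psum_group_by_source (l : list edge) (L : list pt) g : NoDup L ->
  psum (filter (fun e => asbool (In (src e) L)) l) g = psum L (fun s => psum (out_edges l s) g).
Proof.
  intros HL. induction l as [|e l IH]; simpl.
  - symmetry. apply psum_zero. reflexivity.
  - unfold out_edges at 1; simpl. rewrite (psum_ext L _ (fun s =>
      vadd (if asbool (src e = s) then g e else vzero) (psum (out_edges l s) g))).
    + rewrite psum_add, <- IH.
      destruct (asbool (In (src e) L)) eqn:Hin; [rewrite asbool_true in Hin|rewrite asbool_false in Hin].
      * rewrite (psum_split_at pt_eq_dec L (src e) _ HL Hin).
        rewrite (proj2 (asbool_true (src e = src e)) eq_refl), (psum_zero L); [simpl; vec_ring|].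
        intros s _. destruct (pt_eq_dec s (src e)) as [|Hs]; [reflexivity|].
        destruct (asbool (src e = s)) eqn:Hes; [rewrite asbool_true in Hes; congruence|reflexivity].
      * rewrite (psum_zero L); [vec_ring|].
        intros s Hs. destruct (asbool (src e = s)) eqn:Hes; [rewrite asbool_true in Hes|reflexivity].
        subst. contradiction.
    + intros s _. destruct (asbool (src e = s)); simpl; [reflexivity|vec_ring].
Qed.

Definition rerouted_edges (E : list edge) : list edge :=
  flat_map (fun s => map (pair s) (targets E s)) (supported_sources E).

Definition kept_edges (E : list edge) : list edge :=
  filter (fun e => negb (asbool (In (src e) (supported_sources E)))) E.

Definition rerouted (E : list edge) : list edge := rerouted_edges E ++ kept_edges E.

Definition target_rates (E : list edge) (k : edge -> R) (s : pt) : pt -> R :=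
  epsilon (inhabits (fun _ => 0)) (fun r => (forall t, In t (targets E s) -> 0 < r t) /\
    psum (out_edges E s) (fun e => vscale (k e) (rvec e)) = comb (targets E s) s r).

Definition rerouted_rates (E : list edge) (k : edge -> R) (e : edge) : R :=
  if asbool (In (src e) (supported_sources E)) then target_rates E k (src e) (tgt e) else k e.

Lemma rerouted_edges_In E e : In e (rerouted_edges E) <-> new_edge E e.
Proof.
  destruct e as [s t]. unfold rerouted_edges, new_edge. rewrite in_flat_map. split.
  - intros [s' [Hs Hin]]. apply in_map_iff in Hin as [t' [Heq Ht]]. injection Heq as <- <-. auto.
  - intros [Hs Ht]. exists s. split; [exact Hs|]. apply in_map, Ht.
Qed.

Lemma kept_edges_In E e : In e (kept_edges E) <-> In e E /\ ~ In (src e) (supported_sources E).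
Proof. unfold kept_edges. rewrite filter_In, Bool.negb_true_iff, asbool_false. tauto. Qed.

Lemma rerouted_In E e : In e (rerouted E) <->
  new_edge E e \/ (In e E /\ ~ In (src e) (supported_sources E)).
Proof. unfold rerouted. rewrite in_app_iff, rerouted_edges_In, kept_edges_In. tauto. Qed.

Lemma NoDup_rerouted_edges E : NoDup (rerouted_edges E).
Proof.
  unfold rerouted_edges. pose proof (supported_sources_NoDup E) as HL.
  induction (supported_sources E) as [|s L IH]; simpl; [constructor|].
  inversion HL as [|? ? HsL HL']; subst. apply NoDup_app.
  - apply NoDup_map_NoDup_ForallPairs; [|apply targets_NoDup].
    intros t t' _ _ H. injection H; auto.
  - apply IH, HL'.
  - intros e He1 He2. apply in_map_iff in He1 as [t [<- _]].
    apply in_flat_map in He2 as [s' [Hs' Hin]]. apply in_map_iff in Hin as [t' [Heq _]].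
    injection Heq as -> _. contradiction.
Qed.

Section Rerouting.
Variable E : list edge.
Hypothesis HN : is_network E.
Hypothesis HSE : strongly_endotactic E.

Lemma rerouted_network : is_network (rerouted E).
Proof.
  destruct HN as [Hne [Hnd Hedge]].
  assert (Hnn : forall u, In u (supported_sources E) -> Defs.nonneg u).
  { intros u Hu. apply supported_sources_In in Hu as [Hu _].
    apply in_map_iff in Hu as [e [<- He]]. apply Hedge, He. }
  split; [|split].
  - destruct (exists_last Hne) as [E0 [e0 HE]].
    assert (He0 : In e0 E) by (rewrite HE; apply in_or_app; right; left; reflexivity).
    destruct (classic (In (src e0) (supported_sources E))) as [Hin|Hnin].
    + destruct (targets E (src e0)) as [|t T] eqn:HT; [destruct (targets_nonempty E HN HSE _ Hin HT)|].
      intro Hz. assert (H : In (src e0, t) (rerouted E)).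
      { apply rerouted_In. left. split; [exact Hin|]. simpl. rewrite HT. left. reflexivity. }
      rewrite Hz in H. exact H.
    + intro Hz. assert (H : In e0 (rerouted E)) by (apply rerouted_In; right; auto).
      rewrite Hz in H. exact H.
  - apply NoDup_app; [apply NoDup_rerouted_edges|apply NoDup_filter, Hnd|].
    intros e H1 H2. apply rerouted_edges_In in H1. apply kept_edges_In in H2. apply H2, H1.
  - intros e He. apply rerouted_In in He as [[Hs Ht]|[He _]]; [|apply Hedge, He].
    apply targets_In in Ht as [HtS [Hts _]]. auto.
Qed.

Lemma rerouted_sources u : In u (map src (rerouted E)) <-> In u (map src E).
Proof.
  split.
  - intros Hu. apply in_map_iff in Hu as [e [<- He]].
    apply rerouted_In in He as [[Hs _]|[He _]]; [apply supported_sources_In in Hs; tauto|].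
    apply in_map, He.
  - intros Hu. destruct (classic (In u (supported_sources E))) as [Hin|Hnin].
    + destruct (targets E u) as [|t T] eqn:HT; [contradiction (targets_nonempty E HN HSE u Hin HT)|].
      apply in_map_iff. exists (u, t). split; [reflexivity|].
      apply rerouted_In. left. split; [exact Hin|]. simpl. rewrite HT. left. reflexivity.
    + apply in_map_iff in Hu as [e [<- He]]. apply in_map, rerouted_In. right. auto.
Qed.

Lemma rerouted_hull z : in_source_hull E z <-> in_source_hull (rerouted E) z.
Proof.
  pose proof rerouted_network as [_ [Hnd' _]].
  split; apply scaled_hull_incl.
  - exact Hnd'.
  - intros e He. apply rerouted_sources, in_map, He.
  - apply HN.
  - intros e He. apply rerouted_sources, in_map, He.
Qed.

Lemma rerouted_boundary y : on_source_hull_boundary E y <-> on_source_hull_boundary (rerouted E) y.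
Proof. apply boundary_ext, rerouted_hull. Qed.

Lemma rerouted_realizes k : pos_rates E k ->
  pos_rates (rerouted E) (rerouted_rates E k) /\
  forall x, fvec (rerouted E) (rerouted_rates E k) x = fvec E k x.
Proof.
  intros Hk.
  assert (Hr : forall s, In s (supported_sources E) ->
            (forall t, In t (targets E s) -> 0 < target_rates E k s t) /\
            psum (out_edges E s) (fun e => vscale (k e) (rvec e)) =
            comb (targets E s) s (target_rates E k s))
    by (intros s _; unfold target_rates; apply epsilon_spec, flux_pos_targets; auto).
  split.
  - intros e He. unfold rerouted_rates.
    apply rerouted_In in He as [[Hs Ht]|[He Hn]].
    + rewrite (proj2 (asbool_true _) Hs). apply Hr; auto.
    + rewrite (proj2 (asbool_false _) Hn). apply Hk, He.
  - intro x. unfold fvec. rewrite !vsum_psum. unfold rerouted. rewrite psum_app.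
    rewrite (psum_filter E (fun e => asbool (In (src e) (supported_sources E)))).
    f_equal.
    + unfold rerouted_edges. rewrite psum_flat_map, psum_group_by_source by apply supported_sources_NoDup.
      apply psum_ext. intros s Hs. rewrite psum_map.
      destruct (Hr s Hs) as [_ Heq].
      transitivity (vscale (monom x s) (comb (targets E s) s (target_rates E k s))).
      * unfold comb. rewrite <- psum_scale. apply psum_ext. intros t _.
        unfold rerouted_rates, src, tgt, rvec; simpl. rewrite (proj2 (asbool_true _) Hs). vec_ring.
      * rewrite <- Heq, <- psum_scale. apply psum_ext. intros e He.
        apply out_edges_In in He as [_ <-]. vec_ring.
    + apply psum_ext. intros e He. apply kept_edges_In in He as [_ Hn].
      unfold rerouted_rates. rewrite (proj2 (asbool_false _) Hn). reflexivity.
Qed.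

Hypothesis H2 : stoich_two_dim E.

Lemma new_edges_reach e : new_edge E e -> reach (new_edge E) (tgt e) (src e).
Proof. intros [Hs Ht]. apply targets_reach_back; auto. Qed.

Lemma rerouted_weakly_reversible : (forall e, In e E -> on_source_hull_boundary E (src e)) ->
  weakly_reversible (rerouted E).
Proof.
  intros Hbd e He. apply rerouted_In in He as [Hnew|[He Hn]].
  - apply (reach_mono (new_edge E)), new_edges_reach, Hnew.
    intros e' He'. apply rerouted_In. left. exact He'.
  - exfalso. apply Hn, supported_sources_In. split; [apply in_map, He|].
    apply boundary_supported; [apply HN|apply in_map, He|apply Hbd, He].
Qed.

Lemma rerouted_extremally_weakly_reversible : extremally_weakly_reversible (rerouted E).
Proof.
  intros e [He Hb].
  assert (Hsrc : In (src e) (map src E)) by (apply rerouted_sources, in_map, He).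
  assert (HsS : In (src e) (supported_sources E)).
  { apply supported_sources_In. split; [exact Hsrc|].
    apply boundary_supported; [apply HN|exact Hsrc|apply rerouted_boundary, Hb]. }
  apply rerouted_In in He as [Hnew|[_ Hn]]; [|contradiction].
  apply (reach_mono (new_edge E)); [|apply new_edges_reach, Hnew].
  intros e' [Hs' Ht']. split; [apply rerouted_In; left; split; assumption|].
  apply rerouted_boundary, supported_on_boundary; [apply HN|apply supported_sources_In in Hs'; tauto..].
Qed.

End Rerouting.

Theorem theorem5 :
  forall E : list edge,
    is_network E -> strongly_endotactic E -> stoich_two_dim E ->
    ((forall e, In e E -> on_source_hull_boundary E (src e)) ->
       exists E' : list edge,
         is_network E' /\ weakly_reversible E' /\ realized_by E E')
    /\ effectively_EWR E.
Proof.
  intros E HN HSE H2. split.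
  - intros Hbd. exists (rerouted E).
    split; [apply rerouted_network; auto|split; [apply rerouted_weakly_reversible; auto|]].
    intros k Hk. exists (rerouted_rates E k).
    destruct (rerouted_realizes E HN HSE k Hk) as [Hpos Heq]. auto.
  - intros k Hk. exists (rerouted E), (rerouted_rates E k).
    destruct (rerouted_realizes E HN HSE k Hk) as [Hpos Heq].
    split; [apply rerouted_network; auto|].
    split; [exact Hpos|split; [apply rerouted_extremally_weakly_reversible; auto|auto]].
Qed.
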